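(* Let $\mathcal{A}$ and $\mathcal{B}$ be unital algebras over a field of characteristic zero, let $\mathcal{M}$ be an $(\mathcal{A},\mathcal{B})$-bimodule which is faithful as a left $\mathcal{A}$-module and as a right $\mathcal{B}$-module, and let $\mathcal{T}=Tri(\mathcal{A},\mathcal{M},\mathcal{B})$ be the associated (unital) triangular algebra, with identity $\mathbf{1}$ and center $Z(\mathcal{T})$. Let $n>1$ be an integer, let $\gamma$ be an invertible element of $Z(\mathcal{T})$, and let $\Psi,\Omega:\mathcal{T}\to\mathcal{T}$ be additive mappings satisfying \[ \Psi(X^n)=\gamma X\,\Omega(X^{n-1})=\gamma\,\Omega(X^{n-1})X\quad\text{for all } X\in\mathcal{T}. \] If $\Omega(\mathbf{1})\in Z(\mathcal{T})$, then $\Psi$ and $\Omega$ are two-sided centralizers on $\mathcal{T}$ and $\Psi=\gamma\Omega$.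
   Context: For algebras $\mathcal{A},\mathcal{B}$ and an $(\mathcal{A},\mathcal{B})$-bimodule $\mathcal{M}$, the triangular algebra $Tri(\mathcal{A},\mathcal{M},\mathcal{B})$ is the set of matrices $\begin{bmatrix} a & m\\ 0 & b\end{bmatrix}$ with $a\in\mathcal{A}$, $m\in\mathcal{M}$, $b\in\mathcal{B}$, under the usual matrix operations; it is unital when $\mathcal{A}$ and $\mathcal{B}$ are. Its center is $Z(\mathcal{T})=\{a\oplus b: a\in Z(\mathcal{A}),\ b\in Z(\mathcal{B}),\ am=mb \text{ for all } m\in\mathcal{M}\}$. An additive map $T:\mathcal{T}\to\mathcal{T}$ is a two-sided centralizer if $T(XY)=T(X)Y=XT(Y)$ for all $X,Y\in\mathcal{T}$. *)

From HB Require Import structures.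
From mathcomp Require Import all_boot all_order all_algebra.
Set Implicit Arguments. Unset Strict Implicit. Unset Printing Implicit Defensive.
Import GRing.Theory.
Local Open Scope ring_scope.

Section Tri.
Variables (F : fieldType) (A B : algType F) (M : lmodType F).
Variables (lact : A -> M -> M) (ract : M -> B -> M).

Record is_bimodule : Prop := IsBimodule {
  lactDr : forall a m1 m2, lact a (m1 + m2) = lact a m1 + lact a m2;
  lactDl : forall a1 a2 m, lact (a1 + a2) m = lact a1 m + lact a2 m;
  lactM : forall a1 a2 m, lact (a1 * a2) m = lact a1 (lact a2 m);
  lact1 : forall m, lact 1 m = m;
  lactZl : forall (k : F) a m, lact (k *: a) m = k *: lact a m;
  lactZr : forall (k : F) a m, lact a (k *: m) = k *: lact a m;
  ractDl : forall m1 m2 b, ract (m1 + m2) b = ract m1 b + ract m2 b;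
  ractDr : forall m b1 b2, ract m (b1 + b2) = ract m b1 + ract m b2;
  ractM : forall m b1 b2, ract m (b1 * b2) = ract (ract m b1) b2;
  ract1 : forall m, ract m 1 = m;
  ractZl : forall (k : F) m b, ract (k *: m) b = k *: ract m b;
  ractZr : forall (k : F) m b, ract m (k *: b) = k *: ract m b;
  lract : forall a m b, ract (lact a m) b = lact a (ract m b)
}.

Definition faithful_left : Prop :=
  forall a : A, (forall m : M, lact a m = 0) -> a = 0.
Definition faithful_right : Prop :=
  forall b : B, (forall m : M, ract m b = 0) -> b = 0.

(* The triangular algebra Tri(A,M,B): the matrix [a m; 0 b] is encoded as
   the triple ((a, m), b).  Its additive group is the product group. *)
Definition Tri := (A * M * B)%type.

Definition tri_mul (X Y : Tri) : Tri :=
  let: (a1, m1, b1) := X in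
  let: (a2, m2, b2) := Y in
  (a1 * a2, lact a1 m2 + ract m1 b2, b1 * b2).

Definition tri_one : Tri := (1, 0, 1).

Fixpoint tri_pow (X : Tri) (k : nat) : Tri :=
  match k with
  | 0 => tri_one
  | k'.+1 => tri_mul X (tri_pow X k')
  end.

Definition tri_center (Z : Tri) : Prop :=
  forall X : Tri, tri_mul Z X = tri_mul X Z.

Definition tri_invertible (g : Tri) : Prop :=
  exists h : Tri, tri_mul g h = tri_one /\ tri_mul h g = tri_one.

Definition tri_additive (f : Tri -> Tri) : Prop :=
  forall X Y : Tri, f (X + Y) = f X + f Y.

Definition two_sided_centralizer (f : Tri -> Tri) : Prop :=
  tri_additive f /\
  forall X Y : Tri, f (tri_mul X Y) = tri_mul (f X) Y /\
                    tri_mul (f X) Y = tri_mul X (f Y).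

End Tri.

From HB Require Import structures.
From mathcomp Require Import all_boot all_order all_algebra.
Set Implicit Arguments. Unset Strict Implicit. Unset Printing Implicit Defensive.
Import GRing.Theory.
Local Open Scope ring_scope.

(* Put N = n - 1.  Evaluating the identity at X *+ k + 1 for k = 0, ..., N + 1
   and comparing the coefficients of the powers of k (the nodes are distinct in
   characteristic 0) gives
     (N + 1) Psi(X) = N gamma Omega(X) + gamma X Omega(1),
     C(N+1,2) Psi(X^2) = C(N,2) gamma Omega(X^2) + N gamma X Omega(X),
     X Omega(X) = Omega(X) X.
   Eliminating Psi(X^2) and cancelling the invertible gamma shows that
   D(X) = Omega(X) - Omega(1) X is a commuting Jordan derivation.  On a
   triangular algebra with a faithful bimodule such a map vanishes: with
   e = [1 0; 0 0], D(e) = 0 and D commutes with e, which kills D on the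
   M-corner, and faithfulness of M kills it on the A- and B-corners.  Hence
   Omega(X) = Omega(1) X, then Psi = gamma Omega, and left multiplication by a
   central element is a two-sided centralizer. *)

Section CharZeroModule.
Variables (F : fieldType) (V : lmodType F).
Hypothesis charF0 : [pchar F] =i pred0.

Lemma mulrnI_char0 k : (0 < k)%N -> injective (fun v : V => v *+ k).
Proof.
move=> k_gt0 u v /(congr1 (fun w => k%:R^-1 *: w)).
have kF0 : k%:R != 0 :> F by rewrite ((pcharf0P _).1 charF0) -lt0n.
by rewrite -!scaler_nat !scalerA mulVf // !scale1r.
Qed.

Lemma natpoly_coef_eq m (v w : nat -> V) :
    (forall k, (k <= m)%N ->
       \sum_(i < m.+1) v i *+ k ^ i = \sum_(i < m.+1) w i *+ k ^ i) ->
  forall r, (r <= m)%N -> v r = w r.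
Proof.
move=> vw r le_rm; apply/eqP; rewrite -subr_eq0; apply/eqP.
(* Invert the Vandermonde matrix of the nodes 0, ..., m. *)
pose W := Vandermonde m.+1 (\row_(j < m.+1) (j : nat)%:R : 'rV[F]_m.+1).
have W_unit : W \in unitmx.
  rewrite unitmxE det_Vandermonde unitfE.
  apply/prodf_neq0 => i _; apply/prodf_neq0 => j lt_ij.
  by rewrite !mxE -natrB 1?ltnW // ((pcharf0P _).1 charF0) subn_eq0 -ltnNge.
pose r' : 'I_m.+1 := Ordinal (le_rm : (r < m.+1)%N).
have -> : v r - w r = \sum_(i < m.+1) (W *m invmx W) i r' *: (v i - w i).
  rewrite mulmxV // (bigD1 r') //= mxE eqxx scale1r big1 ?addr0 // => i ne_ir.
  by rewrite mxE (negbTE ne_ir) scale0r.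
under eq_bigr do rewrite mxE scaler_suml.
rewrite exchange_big big1 //= => j _.
transitivity (invmx W j r' *: \sum_(i < m.+1) (v i - w i) *+ j ^ i).
  rewrite scaler_sumr; apply: eq_bigr => i _.
  by rewrite mxE mulrC -scalerA mxE -natrX scaler_nat.
under eq_bigr do rewrite mulrnBl.
by rewrite sumrB vw ?subrr ?scaler0 // -ltnS.
Qed.

End CharZeroModule.

Lemma additive_zmod_morphism (U V : zmodType) (f : U -> V) :
  {morph f : x y / x + y} -> zmod_morphism f.
Proof. by move=> fD x y; apply/eqP; rewrite eq_sym subr_eq -fD subrK. Qed.

Definition jordan_derivation {R : pzRingType} (D : R -> R) : Prop :=
  forall X, D (X * X) = D X * X + X * D X.

Definition commuting_map {R : pzRingType} (D : R -> R) : Prop :=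
  forall X, X * D X = D X * X.

Section CommutingJordanDerivation.
Variables (R : pzRingType) (D : {additive R -> R}).
Hypotheses (DJ : jordan_derivation D) (DC : commuting_map D).

Lemma cjder_sqr X : D (X * X) = (X * D X) *+ 2.
Proof. by rewrite DJ -DC mulr2n. Qed.

Lemma cjder_sym X Y : D (X * Y + Y * X) = (X * D Y + Y * D X) *+ 2.
Proof.
have expand (a b c d : R) : a + b + (c + d) - (a + d) = b + c.
  by rewrite [a + b]addrC addrACA addrK.
rewrite -[X * Y + Y * X](expand (X * X) _ _ (Y * Y)) -!mulrDr -mulrDl.
rewrite raddfB raddfD !cjder_sqr -mulrnDl -mulrnBl.
by rewrite raddfD mulrDl !mulrDr expand.
Qed.

Lemma cjder_comm X Y : X * D Y + Y * D X = D Y * X + D X * Y.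
Proof.
have := DC (X + Y).
rewrite !raddfD !mulrDl !mulrDr (DC X) (DC Y).
by rewrite -!addrA => /addrI; rewrite !addrA => /addIr ->; rewrite addrC.
Qed.

End CommutingJordanDerivation.

Lemma raddf_expD1n (R : pzRingType) (V : zmodType) (f : {additive R -> V}) (X : R) k j :
  f ((X *+ k + 1) ^+ j) = \sum_(i < j.+1) f (X ^+ i) *+ 'C(j, i) *+ k ^ i.
Proof.
rewrite exprD1n raddf_sum; apply: eq_bigr => i _.
by rewrite exprMn_n !raddfMn -!mulrnA mulnC.
Qed.

Lemma mulr_natpoly (R : pzRingType) (x : R) m (a : nat -> R) k :
  x *+ k * \sum_(i < m) a i *+ k ^ i
    = \sum_(i < m.+1) (if (i : nat) is j.+1 then x * a j else 0) *+ k ^ i.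
Proof.
rewrite big_ord_recl mul0rn add0r mulr_sumr; apply: eq_bigr => i _.
by rewrite lift0 mulrnAl mulrnAr -mulrnA -expnSr.
Qed.

Lemma mulr_natpolyr (R : pzRingType) (x : R) m (a : nat -> R) k :
  (\sum_(i < m) a i *+ k ^ i) * (x *+ k)
    = \sum_(i < m.+1) (if (i : nat) is j.+1 then a j * x else 0) *+ k ^ i.
Proof.
rewrite big_ord_recl mul0rn add0r mulr_suml; apply: eq_bigr => i _.
by rewrite lift0 mulrnAl mulrnAr -mulrnA -expnS.
Qed.

Section PowerIdentity.
Variables (F : fieldType) (R : lalgType F).
Hypothesis charF0 : [pchar F] =i pred0.
Variables (Psi Omega : {additive R -> R}) (g : R) (N : nat).
Hypotheses (g_lreg : GRing.lreg g) (N_gt0 : (0 < N)%N).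
Hypothesis PsiE : forall X, Psi (X ^+ N.+1) = g * (X * Omega (X ^+ N)).
Hypothesis OmegaC : forall X, X * Omega (X ^+ N) = Omega (X ^+ N) * X.
Hypothesis Omega1C : forall X, Omega 1 * X = X * Omega 1.

(* The coefficient of k ^ i in the identity [PsiE] at X *+ k + 1. *)
Lemma Psi_coef X i : (i <= N.+1)%N ->
  Psi (X ^+ i) *+ 'C(N.+1, i)
    = g * Omega (X ^+ i) *+ 'C(N, i)
      + (if i is j.+1 then g * (X * Omega (X ^+ j)) *+ 'C(N, j) else 0).
Proof.
move: i; apply: (natpoly_coef_eq charF0) => k _.
rewrite -raddf_expD1n PsiE raddf_expD1n mulrDl mul1r mulrDr addrC.
rewrite (mulr_natpoly _ _ (fun j => Omega (X ^+ j) *+ 'C(N, j))).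
under [RHS]eq_bigr do rewrite mulrnDl.
rewrite big_split [X in _ = X + _]big_ord_recr /= bin_small // mul0rn addr0 !mulr_sumr.
by congr (_ + _); apply: eq_bigr => -[[|i] ?] _; rewrite /= ?mulr0 ?mul0rn // !mulrnAr.
Qed.

Lemma Psi_coef1 X : Psi X *+ N.+1 = g * Omega X *+ N + g * (X * Omega 1).
Proof.
by have := Psi_coef X (isT : 1 <= N.+1)%N; rewrite expr1 expr0 !bin1 bin0 mulr1n.
Qed.

Lemma Psi_coef2 X :
  Psi (X ^+ 2) *+ 'C(N.+1, 2) = g * Omega (X ^+ 2) *+ 'C(N, 2) + g * (X * Omega X) *+ N.
Proof. by have := @Psi_coef X 2 N_gt0; rewrite expr1 bin1. Qed.

Lemma Omega_comm : commuting_map Omega.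
Proof.
move=> X; apply: (mulrnI_char0 charF0 N_gt0).
pose S j := Omega (X ^+ j) *+ 'C(N, j).
suff /(_ 2 N_gt0) : forall i, (i <= N.+1)%N ->
    (if i is j.+1 then X * S j else 0) = (if i is j.+1 then S j * X else 0).
  by rewrite /= /S expr1 bin1 mulrnAr mulrnAl.
apply: (natpoly_coef_eq charF0) => k _.
rewrite -(mulr_natpoly _ _ S) -(mulr_natpolyr _ _ S) /S -!raddf_expD1n.
apply: (@addIr _ (Omega ((X *+ k + 1) ^+ N))).
by rewrite -{2}(mul1r (Omega _)) -mulrDl -{3}(mulr1 (Omega _)) -mulrDr OmegaC.
Qed.

Lemma Omega_sqr X : Omega (X ^+ 2) + X ^+ 2 * Omega 1 = (X * Omega X) *+ 2.
Proof.
have binN1 : (N.+1 * N = 'C(N.+1, 2) * 2)%N.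
  by rewrite [RHS]mulnC mul_bin_left bin1 subn1 mulnC.
have binN : (N * N = 'C(N, 2) * 2 + N)%N.
  by rewrite [(_ * 2)%N]mulnC mul_bin_left bin1 subn1 -mulSnr prednK.
(* N * [Psi_coef1] at X ^+ 2 minus 2 * [Psi_coef2] eliminates Psi (X ^+ 2). *)
apply: g_lreg; apply: (mulrnI_char0 charF0 N_gt0).
have := congr1 (fun v => v *+ 2) (Psi_coef2 X).
have := congr1 (fun v => v *+ N) (Psi_coef1 (X ^+ 2)).
rewrite /= -!mulrnA binN1 => ->.
rewrite !mulrnDl -!mulrnA binN mulrnDr -addrA => /addrI E.
by rewrite mulrDr mulrnDl E mulrnAr -mulrnA mulnC.
Qed.

Lemma Omega_sub_jordan : jordan_derivation (Omega \- Omega 1 \*o idfun).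
Proof.
move=> X /=.
have OmegaXX : Omega (X * X) = (X * Omega X) *+ 2 - Omega 1 * (X * X).
  by rewrite -expr2 -Omega_sqr Omega1C addrK.
rewrite OmegaXX mulrBl mulrBr -Omega_comm !mulrA -Omega1C.
by rewrite mulr2n -addrA addrACA.
Qed.

Lemma Omega_sub_commuting : commuting_map (Omega \- Omega 1 \*o idfun).
Proof. by move=> X /=; rewrite mulrBr mulrBl Omega_comm mulrA -Omega1C. Qed.

Lemma power_identity_mull :
    (forall D : {additive R -> R}, jordan_derivation D -> commuting_map D ->
       forall X, D X = 0) ->
  (forall X, Omega X = Omega 1 * X) /\ (forall X, Psi X = g * Omega X).
Proof.
move=> cjder0; have OmegaE X : Omega X = Omega 1 * X.
  apply/eqP; rewrite -subr_eq0; apply/eqP.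
  exact: cjder0 Omega_sub_jordan Omega_sub_commuting X.
split=> // X; apply: (mulrnI_char0 charF0 (ltn0Sn N)).
by rewrite /= Psi_coef1 (OmegaE X) -Omega1C mulrSr.
Qed.

End PowerIdentity.

Lemma idempotent_double_eq0 (R : pzRingType) (e y : R) :
  e * e = e -> y = (e * y) *+ 2 -> y = 0.
Proof.
move=> ee y2ey; have ey2 : e * y = (e * y) *+ 2 by rewrite {1}y2ey mulrnAr mulrA ee.
have ey0 : e * y = 0 by apply: (addrI (e * y)); rewrite addr0 -mulr2n -ey2.
by rewrite y2ey ey0 mul0rn.
Qed.

Section TriangularAlgebra.
Variables (F : fieldType) (A B : algType F) (M : lmodType F).
Variables (lact : A -> M -> M) (ract : M -> B -> M).
Hypothesis bimod : is_bimodule lact ract.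

Lemma lact0r a : lact a 0 = 0.
Proof. by apply: (addrI (lact a 0)); rewrite -(lactDr bimod) !addr0. Qed.

Lemma lact0l m : lact 0 m = 0.
Proof. by apply: (addrI (lact 0 m)); rewrite -(lactDl bimod) !addr0. Qed.

Lemma ract0l b : ract 0 b = 0.
Proof. by apply: (addrI (ract 0 b)); rewrite -(ractDl bimod) !addr0. Qed.

Lemma ract0r m : ract m 0 = 0.
Proof. by apply: (addrI (ract m 0)); rewrite -(ractDr bimod) !addr0. Qed.

(* The ring structure needs the bimodule axioms, so the carrier is indexed by
   their proof to make the instances below canonical. *)
Definition tri_ring of is_bimodule lact ract : Type := Tri A B M.
Local Notation T := (tri_ring bimod).

HB.instance Definition _ := GRing.Lmodule.on T.

Lemma tri_mulA : associative (tri_mul lact ract : T -> T -> T).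
Proof.
move=> [[a1 m1] b1] [[a2 m2] b2] [[a3 m3] b3] /=.
rewrite !mulrA (lactM bimod) (lactDr bimod) (ractDl bimod) (ractM bimod).
by rewrite (lract bimod) addrA.
Qed.

Lemma tri_mul1r : left_id (tri_one A B M : T) (tri_mul lact ract).
Proof. by move=> [[a m] b] /=; rewrite !mul1r (lact1 bimod) ract0l addr0. Qed.

Lemma tri_mulr1 : right_id (tri_one A B M : T) (tri_mul lact ract).
Proof. by move=> [[a m] b] /=; rewrite !mulr1 (ract1 bimod) lact0r add0r. Qed.

Lemma tri_mulDl : left_distributive (tri_mul lact ract : T -> T -> T) +%R.
Proof.
move=> [[a1 m1] b1] [[a2 m2] b2] [[a3 m3] b3] /=.
by rewrite !mulrDl (lactDl bimod) (ractDl bimod) addrACA.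
Qed.

Lemma tri_mulDr : right_distributive (tri_mul lact ract : T -> T -> T) +%R.
Proof.
move=> [[a1 m1] b1] [[a2 m2] b2] [[a3 m3] b3] /=.
by rewrite !mulrDr (lactDr bimod) (ractDr bimod) addrACA.
Qed.

Lemma tri_one_neq0 : (tri_one A B M : T) != 0.
Proof. by apply: contraNneq (oner_neq0 A) => -[/eqP]. Qed.

HB.instance Definition _ := GRing.Zmodule_isNzRing.Build T
  tri_mulA tri_mul1r tri_mulr1 tri_mulDl tri_mulDr tri_one_neq0.

Lemma tri_scalerAl (k : F) (X Y : T) : k *: (X * Y) = k *: X * Y.
Proof.
case: X Y => [[a1 m1] b1] [[a2 m2] b2].
change ((k *: (a1 * a2), k *: (lact a1 m2 + ract m1 b2), k *: (b1 * b2))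
   = (k *: a1 * a2, lact (k *: a1) m2 + ract (k *: m1) b2, k *: b1 * b2)).
by rewrite !scalerAl scalerDr (lactZl bimod) (ractZl bimod).
Qed.

HB.instance Definition _ := GRing.Lmodule_isLalgebra.Build F T tri_scalerAl.

Lemma tri0 : ((0, 0, 0) : T) = 0.
Proof. by []. Qed.

Lemma tri_mulE a1 m1 b1 a2 m2 b2 :
  ((a1, m1, b1) : T) * (a2, m2, b2) = (a1 * a2, lact a1 m2 + ract m1 b2, b1 * b2).
Proof. by []. Qed.

Lemma tri_powE (X : T) k : tri_pow lact ract X k = X ^+ k.
Proof. by elim: k => // k IHk; rewrite exprS /= IHk. Qed.

Lemma tri_invertible_lreg (g : T) : tri_invertible lact ract g -> GRing.lreg g.
Proof.
case=> h [_ hg] x y gxy; have hg1 : (h : T) * g = 1 := hg.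
by rewrite -[x]mul1r -hg1 -mulrA gxy mulrA hg1 mul1r.
Qed.

Lemma tri_center_mul (y z : T) :
  tri_center lact ract y -> tri_center lact ract z -> tri_center lact ract (y * z).
Proof.
move=> yC zC X; change (y * z * (X : T) = (X : T) * (y * z)).
have yC' : forall X : T, y * X = X * y := yC.
have zC' : forall X : T, z * X = X * z := zC.
by rewrite -mulrA zC' mulrA yC' -mulrA.
Qed.

Lemma tri_centralizer_mull (f : T -> T) (z : T) :
    tri_additive f -> tri_center lact ract z -> (forall X, f X = z * X) ->
  two_sided_centralizer lact ract f.
Proof.
move=> fD zC fE; split=> // X Y.
have zC' : forall X : T, z * X = X * z := zC.
change (f ((X : T) * Y) = f X * Y /\ f X * Y = (X : T) * f Y).
by rewrite !fE mulrA zC' -mulrA.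
Qed.

Section CommutingJordanDerivation.
Hypothesis charF0 : [pchar F] =i pred0.
Hypotheses (faithL : faithful_left lact) (faithR : faithful_right ract).
Variable D : {additive T -> T}.
Hypotheses (DJ : jordan_derivation D) (DC : commuting_map D).

Local Notation e := ((1, 0, 0) : T).

Lemma tri_e_mul a m b : e * ((a, m, b) : T) = (a, m, 0).
Proof. by rewrite tri_mulE mul1r mul0r (lact1 bimod) ract0l addr0. Qed.

Lemma tri_mul_e a m b : ((a, m, b) : T) * e = (a, 0, 0).
Proof. by rewrite tri_mulE mulr1 mulr0 lact0r ract0r addr0. Qed.

Lemma tri_m_mul m a m' b : ((0, m, 0) : T) * (a, m', b) = (0, ract m b, 0).
Proof. by rewrite tri_mulE mul0r mul0r lact0l add0r. Qed.

Lemma tri_mul_m a m' b m : ((a, m', b) : T) * (0, m, 0) = (0, lact a m, 0).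
Proof. by rewrite tri_mulE mulr0 mulr0 ract0r addr0. Qed.

Lemma cjder_e : D e = 0.
Proof.
have ee : e * e = e by rewrite tri_e_mul.
by apply: (idempotent_double_eq0 ee); rewrite -cjder_sqr // ee.
Qed.

Lemma cjder_e_sym Y : D (e * Y + Y * e) = (e * D Y) *+ 2.
Proof. by rewrite cjder_sym // cjder_e mulr0 addr0. Qed.

Lemma cjder_e_comm Y : e * D Y = D Y * e.
Proof. by have := cjder_comm DC e Y; rewrite cjder_e mulr0 mul0r !addr0. Qed.

Lemma cjder_m m : D (0, m, 0) = 0.
Proof.
apply: (idempotent_double_eq0 (tri_e_mul 1 0 0)).
by rewrite -cjder_e_sym tri_e_mul tri_mul_e tri0 addr0.
Qed.

Lemma cjder_m_comm X m : ((0, m, 0) : T) * D X = D X * (0, m, 0).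
Proof.
by have := cjder_comm DC X (0, m, 0); rewrite cjder_m mulr0 mul0r !add0r.
Qed.

Lemma cjder_a a : D (a, 0, 0) = 0.
Proof.
have DPe : D (a, 0, 0) = e * D (a, 0, 0).
  apply: (mulrnI_char0 charF0 (isT : 0 < 2)%N).
  by rewrite /= -cjder_e_sym tri_e_mul tri_mul_e -mulr2n raddfMn.
move: (cjder_e_comm (a, 0, 0)) DPe (cjder_m_comm (a, 0, 0)).
case: (D (a, 0, 0)) => [[p q] r]; rewrite tri_e_mul tri_mul_e => -[->] [->] DPm.
suff -> : p = 0 by [].
by apply: faithL => m; have := DPm m; rewrite tri_m_mul tri_mul_m ract0r => -[<-].
Qed.

Lemma cjder_b b : D (0, 0, b) = 0.
Proof.
have eDQ : e * D (0, 0, b) = 0.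
  apply: (mulrnI_char0 charF0 (isT : 0 < 2)%N).
  by rewrite /= -cjder_e_sym tri_e_mul tri_mul_e tri0 addr0 raddf0 mul0rn.
move: eDQ (cjder_m_comm (0, 0, b)).
case: (D (0, 0, b)) => [[p q] r]; rewrite tri_e_mul -tri0 => -[-> ->] DQm.
suff -> : r = 0 by [].
by apply: faithR => m; have := DQm m; rewrite tri_m_mul tri_mul_m lact0l => -[].
Qed.

Lemma tri_cjder_eq0 X : D X = 0.
Proof.
case: X => [[a m] b].
have -> : ((a, m, b) : T) = (a, 0, 0) + (0, m, 0) + (0, 0, b).
  by change ((a, m, b) = (a + 0 + 0, 0 + m + 0, 0 + 0 + b)); rewrite !addr0 !add0r.
by rewrite !raddfD cjder_a cjder_m cjder_b !addr0.
Qed.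

End CommutingJordanDerivation.

End TriangularAlgebra.

Theorem corollary2p2 (F : fieldType) (charF0 : [pchar F] =i pred0)
  (A B : algType F) (M : lmodType F)
  (lact : A -> M -> M) (ract : M -> B -> M)
  (Hbimod : is_bimodule lact ract)
  (HfaithL : faithful_left lact) (HfaithR : faithful_right ract)
  (n : nat) (Hn : (1 < n)%N)
  (gamma : Tri A B M)
  (Hgamma_center : tri_center lact ract gamma)
  (Hgamma_inv : tri_invertible lact ract gamma)
  (Psi Omega : Tri A B M -> Tri A B M)
  (HPsi_add : tri_additive Psi) (HOmega_add : tri_additive Omega)
  (Hid : forall X : Tri A B M,
     Psi (tri_pow lact ract X n)
       = tri_mul lact ract gamma
           (tri_mul lact ract X (Omega (tri_pow lact ract X n.-1)))
     /\ tri_mul lact ract gamma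
           (tri_mul lact ract X (Omega (tri_pow lact ract X n.-1)))
       = tri_mul lact ract gamma
           (tri_mul lact ract (Omega (tri_pow lact ract X n.-1)) X))
  (HOmega1 : tri_center lact ract (Omega (tri_one A B M))) :
  two_sided_centralizer lact ract Psi /\ two_sided_centralizer lact ract Omega
  /\ forall X : Tri A B M, Psi X = tri_mul lact ract gamma (Omega X).
Proof.
case: n Hn Hid => [|N] // N_gt0 Hid.
pose T := tri_ring Hbimod.
pose PsiA : {additive T -> T} :=
  HB.pack Psi (GRing.isZmodMorphism.Build T T Psi (additive_zmod_morphism HPsi_add)).
pose OmegaA : {additive T -> T} :=
  HB.pack Omega (GRing.isZmodMorphism.Build T T Omega (additive_zmod_morphism HOmega_add)).
have PsiE (X : T) : PsiA (X ^+ N.+1) = (gamma : T) * (X * OmegaA (X ^+ N)).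
  by rewrite -!tri_powE; exact: (Hid X).1.
have OmegaC (X : T) : X * OmegaA (X ^+ N) = OmegaA (X ^+ N) * X.
  by apply: (tri_invertible_lreg Hgamma_inv); rewrite -!tri_powE; exact: (Hid X).2.
have Omega1C (X : T) : OmegaA 1 * X = X * OmegaA 1 := HOmega1 X.
have [OmegaE PsiOmega] := power_identity_mull charF0 (tri_invertible_lreg Hgamma_inv)
  N_gt0 PsiE OmegaC Omega1C (tri_cjder_eq0 charF0 HfaithL HfaithR).
split; [|split].
- apply: (tri_centralizer_mull HPsi_add (tri_center_mul Hgamma_center HOmega1)) => X.
  by have := PsiOmega X; rewrite OmegaE mulrA.
- exact: tri_centralizer_mull HOmega_add HOmega1 OmegaE.
- exact: PsiOmega.
Qed.
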